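(* Consider an HTSP instance in which all speeds are powers of two, and let $M>0$ be at least its optimal makespan. Let $\mathcal H=\bigcup_{i\ge0}H_i$ be a Level-Prim tree with respect to $M$. Then: (a) along every path in $\mathcal H$ from $r$ to a leaf, the vertex levels are non-decreasing; (b) for every $i\ge0$, $\sum_{j\ge i}d(H_j)\le 8M\sum_{j\ge i-1}2^j\mu_j$.
   Context: HTSP: the input is a finite metric $(V,d)$, a depot $r$, and vehicles with speeds $\ge1$. A solution consists of tours from $r$ covering $V$, and its makespan is $\max_i d(\tau_i)/\lambda_i$. Here all speeds are powers of two, $\mu_j$ is the number of vehicles of speed $2^j$, and $\mu_{-1}=0$. Levels: $V_0=\{u:d(r,u)\le M\}$, and for $i\ge1$, $V_i=\{u:2^{i-1}M<d(r,u)\le2^iM\}$. Write $V_{\le i}=\bigcup_{j\le i}V_j$ and $V_{<i}=V_{\le i-1}$, with $V_{<0}=\emptyset$. $G$ is the complete graph on $V$ weighted by $d$. $G[U]$ is the induced subgraph, and $G/U$ contracts $U$ to a single vertex, keeping parallel edges. Level-Prim tree: $H_i$ is a minimum spanning tree of $G[V_{\le i}]/V_{<i}$, viewed as edges of $G$, and $\mathcal H=\bigcup_i H_i$. *)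

From HB Require Import structures.
From mathcomp Require Import all_boot all_order all_algebra.
Set Implicit Arguments. Unset Strict Implicit. Unset Printing Implicit Defensive.
Import Order.TTheory GRing.Theory Num.Theory.
Local Open Scope ring_scope.

Section HTSPDefs.
Variables (R : realFieldType) (T : finType).

Definition is_metric (d : T -> T -> R) : Prop :=
  [/\ forall x y, 0 <= d x y, forall x y, d x y = 0 <-> x = y,
      forall x y, d x y = d y x & forall x y z, d x z <= d x y + d y z].

Fixpoint walk_len (d : T -> T -> R) (x : T) (s : seq T) : R :=
  if s is y :: s' then d x y + walk_len d y s' else 0.

Definition tour_len (d : T -> T -> R) (r : T) (t : seq T) : R :=
  walk_len d r (rcons t r).

(* vehicle k has speed 2^(s k); tau k is its tour *)
Definition covers (r : T) (n : nat) (tau : 'I_n -> seq T) : Prop :=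
  forall v, v = r \/ exists k, v \in tau k.

Definition makespan_le (d : T -> T -> R) (r : T) (n : nat) (s : 'I_n -> nat)
  (tau : 'I_n -> seq T) (M : R) : Prop :=
  forall k, tour_len d r (tau k) / (2 ^+ s k) <= M.

Definition opt_le (d : T -> T -> R) (r : T) (n : nat) (s : 'I_n -> nat) (M : R) : Prop :=
  exists tau : 'I_n -> seq T, covers r tau /\ makespan_le d r s tau M.

Definition inV (d : T -> T -> R) (r : T) (M : R) (i : nat) (u : T) : bool :=
  if i is i'.+1 then (2 ^+ i' * M < d r u) && (d r u <= 2 ^+ i * M)
  else d r u <= M.
Definition inVle d r M (i : nat) (u : T) : bool := [exists j : 'I_i.+1, inV d r M j u].
Definition inVlt d r M (i : nat) (u : T) : bool := [exists j : 'I_i, inV d r M j u].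

(* contraction of V_{<i} to the single vertex None *)
Definition contr d r M (i : nat) (u : T) : option T :=
  if inVlt d r M i u then None else Some u.

(* adjacency in the (multi)graph with edge set E after applying c to endpoints;
   edges are undirected, the pair (u,v) just names the edge {u,v} of G *)
Definition cadj (c : T -> option T) (E : {set T * T}) : rel (option T) :=
  fun a b => [exists e in E,
     ((c e.1 == a) && (c e.2 == b)) || ((c e.1 == b) && (c e.2 == a))].

(* E (edges of G) is a spanning tree of G[V_{<=i}] / V_{<i}:
   edges lie in G[V_{<=i}], the contracted graph is connected on its vertex
   set {c x | x in V_{<=i}}, and it is acyclic (every edge is a bridge). *)
Definition spanning_tree_contr d r M (i : nat) (E : {set T * T}) : Prop :=
  let c := contr d r M i in
  [/\ forall e, e \in E -> inVle d r M i e.1 && inVle d r M i e.2,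
      forall x y, inVle d r M i x -> inVle d r M i y ->
        connect (cadj c E) (c x) (c y)
    & forall e, e \in E -> ~~ connect (cadj c (E :\ e)) (c e.1) (c e.2)].

Definition weight (d : T -> T -> R) (E : {set T * T}) : R := \sum_(e in E) d e.1 e.2.

Definition MST_contr d r M (i : nat) (E : {set T * T}) : Prop :=
  spanning_tree_contr d r M i E /\
  forall E', spanning_tree_contr d r M i E' -> weight d E <= weight d E'.

(* H i = H_i; the Level-Prim tree is the union of all H_i *)
Definition level_prim d r M (H : nat -> {set T * T}) : Prop :=
  forall i, MST_contr d r M i (H i).

Definition adjH (H : nat -> {set T * T}) (x y : T) : Prop :=
  exists i, (x, y) \in H i \/ (y, x) \in H i.

Definition leafH (H : nat -> {set T * T}) (x : T) : Prop :=
  exists y, adjH H x y /\ forall z, adjH H x z -> z = y.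

End HTSPDefs.

Definition mu (n : nat) (s : 'I_n -> nat) (j : nat) : nat := #|[set k | s k == j]|.

(* sum_{j >= i-1} 2^j mu_j  (with mu_{-1} = 0); all mu_j vanish for j > max speed *)
Definition tail_cap (n : nat) (s : 'I_n -> nat) (i : nat) : nat :=
  (\sum_(i.-1 <= j < (\max_(k < n) s k).+1) 2 ^ j * mu s j)%N.

From HB Require Import structures.
From mathcomp Require Import all_boot all_order all_algebra.
From mathcomp Require Import lra.
From Stdlib Require Import ClassicalEpsilon.
Import Order.TTheory GRing.Theory Num.Theory.
Local Open Scope ring_scope.
Set Implicit Arguments. Unset Strict Implicit. Unset Printing Implicit Defensive.

(* (a) An edge of H_l joining vertices of levels a and b has l = max a b.  At a first
   descent p_k -> p_(k+1) of a path from r, with L the level of p_k, the edge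
   f = {p_k, p_(k+1)} lies in H_L, and the prefix r ... p_k walks inside
   G[V_(<=L)] / V_(<L) using edges of H_L other than f.  As r and p_(k+1) are both
   contracted into V_(<L), f would not be a bridge of H_L.

   (b) Fix an optimal schedule.  Shortcutting each tour to V_(<=j) and keeping the
   steps that touch V_j gives a connected spanning subgraph of G[V_(<=j)] / V_(<j),
   which bounds d(H_j).  A shortcut step is paid by the tour edges it skips: either
   they stay inside V_(<=j+1) and have an endpoint outside V_(<j), which happens for
   at most two values of j per tour edge, or the tour crosses the whole band
   (2^j M, 2^(j+1) M] of distances from r on the way out and back, and these
   radial crossings telescope over j.  So all levels together cost at most three
   times the tour, i.e. 3 * 2^s M for a vehicle of speed 2^s, and such a vehicle
   visits no level above s. *)

Lemma sum_set_le_seq (R : numDomainType) (I : finType) (f : I -> R)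
    (E : {set I}) (l : seq I) :
  (forall e, 0 <= f e) -> {subset E <= l} -> \sum_(e in E) f e <= \sum_(e <- l) f e.
Proof.
move=> f_ge0 sEl.
have undup_le : \sum_(e <- undup l) f e <= \sum_(e <- l) f e.
  elim: l {sEl} => //= a l IH; rewrite big_cons.
  by case: ifP => _; rewrite ?big_cons ?lerD2l // ler_wpDl.
apply: le_trans undup_le; rewrite big_uniq ?undup_uniq // [leRHS](bigID (mem E)) /=.
rewrite ler_wpDr ?sumr_ge0 // [leRHS](eq_bigl (mem E)) // => e /=.
by rewrite mem_undup andbC; case: (boolP (e \in E)) => // /sEl ->.
Qed.

Lemma mem_pairmap_pair (T : eqType) (x : T) s e :
  e \in pairmap pair x s -> (e.1 \in x :: s) && (e.2 \in s).
Proof.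
elim: s x => [|y s IH] x //=; rewrite inE => /predU1P[-> | /IH /andP[e1 e2]].
  by rewrite /= !inE !eqxx ?orbT.
by apply/andP; split; apply/orP; right.
Qed.

Lemma leq_chain (f : nat -> nat) k : (forall t, (t < k)%N -> (f t <= f t.+1)%N) ->
  forall t, (t <= k)%N -> (f t <= f k)%N.
Proof.
move=> f_step t tk; apply: (@homo_leq_in _ [pred i | i <= k]%N f leq) => //.
- exact: leq_trans.
- by move=> i j _ jk l /andP[_ lj]; rewrite inE ltnW // (leq_trans lj jk).
- by move=> i _; rewrite inE => /f_step.
- by rewrite inE.
Qed.

Section Walks.
Variables (R : realFieldType) (T : finType).
Implicit Types (c : T -> T -> R) (x y : T) (s : seq T).

Lemma walk_len_cat c x s1 s2 :
  walk_len c x (s1 ++ s2) = walk_len c x s1 + walk_len c (last x s1) s2.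
Proof. by elim: s1 x => [|y s IH] x /=; rewrite ?add0r // IH addrA. Qed.

Lemma walk_lenE c x s : walk_len c x s = \sum_(e <- pairmap pair x s) c e.1 e.2.
Proof. by elim: s x => [|y s IH] x /=; rewrite ?big_nil // big_cons IH. Qed.

Lemma walk_len_ge0 c x s : (forall a b, 0 <= c a b) -> 0 <= walk_len c x s.
Proof. by move=> c_ge0; elim: s x => //= y s IH x; rewrite addr_ge0. Qed.

Lemma ler_walk_len c1 c2 x s :
  (forall a b, c1 a b <= c2 a b) -> walk_len c1 x s <= walk_len c2 x s.
Proof. by move=> c12; elim: s x => //= y s IH x; rewrite lerD. Qed.

Lemma walk_len_sum (I : Type) (js : seq I) (c : I -> T -> T -> R) x s :
  \sum_(j <- js) walk_len (c j) x s = walk_len (fun a b => \sum_(j <- js) c j a b) x s.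
Proof.
by elim: s x => [|y s IH] x /=; [rewrite big1 | rewrite -IH -big_split].
Qed.

Lemma walk_len_mulrn c k x s :
  walk_len (fun a b => c a b *+ k) x s = walk_len c x s *+ k.
Proof. by elim: s x => [|y s IH] x /=; rewrite ?mul0rn // IH mulrnDl. Qed.

Lemma walk_len_triangle c x s :
  (forall a, c a a = 0) -> (forall a b e, c a e <= c a b + c b e) ->
  c x (last x s) <= walk_len c x s.
Proof.
move=> c0 c_tri; elim: s x => [|y s IH] x /=; first by rewrite c0.
by apply: le_trans (c_tri x y _) _; rewrite lerD2l.
Qed.

End Walks.

Section Contraction.
Variables (T : finType) (c : T -> option T).
Implicit Type E : {set T * T}.

Lemma cadj_sym E : symmetric (cadj c E).
Proof. by move=> a b; apply: eq_existsb => e; rewrite orbC. Qed.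

Lemma cadj_edge E f a b : f \in E -> f = (a, b) \/ f = (b, a) -> cadj c E (c a) (c b).
Proof.
by move=> fE ab; apply/existsP; exists f; rewrite fE; case: ab => -> /=; rewrite !eqxx ?orbT.
Qed.

Lemma connect_cadj_setD1 E e :
  connect (cadj c (E :\ e)) (c e.1) (c e.2) ->
  subrel (connect (cadj c E)) (connect (cadj c (E :\ e))).
Proof.
move=> e_conn; apply: connect_sub => a b /existsP[f /andP[fE f_ab]].
have [f_e | f_neq] := eqVneq f e.
  by move: f_ab; rewrite f_e => /orP[] /andP[/eqP <- /eqP <-] //;
     rewrite (sym_connect_sym (cadj_sym _)).
by apply: connect1; apply/existsP; exists f; rewrite in_setD1 f_neq fE.
Qed.

End Contraction.

Section DyadicBands.
Variables (R : realFieldType) (M : R).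
Hypothesis M_gt0 : 0 < M.

Lemma ler_dyadic i j : (i <= j)%N -> 2 ^+ i * M <= 2 ^+ j * M.
Proof. by move=> ij; rewrite ler_wpM2r ?(ltW M_gt0) // ler_eXn2l // ltr1n. Qed.

Definition band (j : nat) (x : R) : R :=
  Num.min x (2 ^+ j.+1 * M) - Num.min x (2 ^+ j * M).

Lemma ler_min_sub (x y a b : R) : x <= y -> a <= b ->
  Num.min y a - Num.min x a <= Num.min y b - Num.min x b.
Proof. by move=> xy ab; rewrite /Num.min; do 4!case: ifP; lra. Qed.

Lemma min_sub_ge0 (x y a : R) : x <= y -> 0 <= Num.min y a - Num.min x a <= y - x.
Proof. by move=> xy; rewrite /Num.min; do 2!case: ifP; lra. Qed.

Lemma band_mono j : {homo band j : x y / x <= y}.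
Proof.
move=> x y xy; have := ler_min_sub xy (ler_dyadic (leqnSn j)).
by rewrite /band; lra.
Qed.

Lemma band_below j x : x <= 2 ^+ j * M -> band j x = 0.
Proof.
move=> x_le; have := ler_dyadic (leqnSn j).
by rewrite /band /Num.min; do 2!case: ifP; lra.
Qed.

Lemma band_above j x : 2 ^+ j.+1 * M <= x -> band j x = 2 ^+ j * M.
Proof.
have m_gt0 : 0 < 2 ^+ j * M by rewrite mulr_gt0 ?exprn_gt0.
by move: m_gt0; rewrite /band exprS -mulrA /Num.min => ? ?; do 2!case: ifP; lra.
Qed.

Lemma sum_band_dist N x y : \sum_(0 <= j < N) `|band j x - band j y| <= `|x - y|.
Proof.
wlog xy : x y / x <= y => [wlog_xy|].
  case: (leP x y) => [/wlog_xy //|/ltW /wlog_xy]; rewrite distrC.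
  by under eq_bigr do rewrite distrC.
pose D j := Num.min y (2 ^+ j * M) - Num.min x (2 ^+ j * M).
rewrite (telescope_sumr_eq D _ (leq0n N)) => [|j _]; last first.
  by rewrite distrC ger0_norm ?subr_ge0 ?band_mono // /band /D; lra.
have := min_sub_ge0 (2 ^+ N * M) xy; have := min_sub_ge0 (2 ^+ 0 * M) xy.
by rewrite distrC ger0_norm ?subr_ge0 // /D; lra.
Qed.

End DyadicBands.

Lemma tail_capE n (s : 'I_n -> nat) i :
  tail_cap s i = (\sum_(k < n) if (i.-1 <= s k)%N then 2 ^ s k else 0)%N.
Proof.
have muE j : (2 ^ j * mu s j = \sum_(k < n) if s k == j then 2 ^ s k else 0)%N.
  rewrite /mu -sum1_card big_distrr /= big_mkcond; apply: eq_bigr => k _.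
  by rewrite inE muln1; case: eqP => [-> |].
rewrite /tail_cap (eq_bigr _ (fun j _ => muE j)) exchange_big /=; apply: eq_bigr => k _.
rewrite -big_mkcond big_const_seq /= (@eq_count _ _ (pred1 (s k))) => [|j]; last exact: eq_sym.
rewrite count_uniq_mem ?iota_uniq // mem_index_iota ltnS leq_bigmax andbT.
by case: (i.-1 <= s k)%N => /=; rewrite ?addn0.
Qed.

Section HTSP.
Variables (R : realFieldType) (T : finType) (d : T -> T -> R) (r : T) (M : R).
Hypothesis d_metric : is_metric d.
Hypothesis M_gt0 : 0 < M.

Local Notation V := (inV d r M).
Local Notation Vle := (inVle d r M).
Local Notation Vlt := (inVlt d r M).
Local Notation c_ j := (contr d r M j).

Lemma metric_ge0 x y : 0 <= d x y. Proof. by case: d_metric. Qed.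
Lemma metric_sym x y : d x y = d y x. Proof. by case: d_metric. Qed.
Lemma metric_triangle x y z : d x z <= d x y + d y z. Proof. by case: d_metric. Qed.
Lemma metric_xx x : d x x = 0. Proof. by case: d_metric => _ /(_ x x) [_ ->]. Qed.

Lemma metric_reverse_triangle a b : `|d r a - d r b| <= d a b.
Proof.
have := metric_triangle r a b; have := metric_triangle r b a.
by rewrite (metric_sym b a) ler_norml; lra.
Qed.

Lemma inV_le i u : V i u -> d r u <= 2 ^+ i * M.
Proof. by case: i => [|i] /=; [rewrite expr0 mul1r | case/andP]. Qed.

Lemma inV_gt i u : V i.+1 u -> 2 ^+ i * M < d r u.
Proof. by case/andP. Qed.

Lemma inV_uniq i j u : V i u -> V j u -> i = j.
Proof.
wlog ij : i j / (i <= j)%N => [wlog_ij|].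
  by case/orP: (leq_total i j) => ? Vi Vj; [|apply/esym]; apply: wlog_ij.
case: j ij => [|j] ij Vi Vj; first by case: i ij Vi.
apply/eqP; rewrite eqn_leq ij ltnNge; apply/negP => ji.
have := le_trans (inV_le Vi) (ler_dyadic M_gt0 ji).
by move/(lt_le_trans (inV_gt Vj)); rewrite ltxx.
Qed.

Lemma inVleP i u : reflect (exists2 j, (j <= i)%N & V j u) (Vle i u).
Proof.
apply: (iffP existsP) => [[j Vj]|[j ji Vj]]; first by exists j; rewrite // -ltnS.
by exists (Ordinal (ji : (j < i.+1)%N)).
Qed.

Lemma inVltP i u : reflect (exists2 j, (j < i)%N & V j u) (Vlt i u).
Proof.
by apply: (iffP existsP) => [[j Vj]|[j ji Vj]]; [exists j | exists (Ordinal ji)].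
Qed.

Lemma inVltE i l u : V i u -> Vlt l u = (i < l)%N.
Proof.
by move=> Vi; apply/inVltP/idP => [[j jl /(inV_uniq Vi) ->]|il] //; exists i.
Qed.

Lemma inVleE i l u : V i u -> Vle l u = (i <= l)%N.
Proof.
by move=> Vi; apply/inVleP/idP => [[j jl /(inV_uniq Vi) ->]|il] //; exists i.
Qed.

Lemma inVle_dist i u : Vle i u = (d r u <= 2 ^+ i * M).
Proof.
apply/inVleP/idP => [[j ji /inV_le du]|]; first exact: le_trans du (ler_dyadic M_gt0 ji).
elim: i => [|i IH] du; first by exists 0%N; rewrite //= -[M]mul1r.
case: (leP (d r u) (2 ^+ i * M)) => [/IH [j ji Vj]|lt_du].
  by exists j; rewrite // leqW.
by exists i.+1; rewrite //= lt_du.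
Qed.

Lemma inVlt_le i u : Vlt i u -> Vle i u.
Proof.
case: i => [|i]; first by case/inVltP.
change (Vle i u -> Vle i.+1 u); rewrite !inVle_dist => du.
exact: le_trans du (ler_dyadic M_gt0 (leqnSn i)).
Qed.

(* [Vlt i.+1] and [Vle i] are convertible; several proofs below rely on it. *)
Lemma inVleS i u : Vle i u -> Vle i.+1 u.
Proof. exact: (@inVlt_le i.+1). Qed.

Lemma inV0r : V 0 r.
Proof. by rewrite /= metric_xx ltW. Qed.

Lemma inVle_notin_lt j u : Vle j u -> ~~ V j u -> Vlt j u.
Proof.
case/inVleP => i; rewrite leq_eqVlt => /orP[/eqP -> -> //|ij Vi _].
by apply/inVltP; exists i.
Qed.

(* Over a non-archimedean field a vertex may lie in no level; [level] is then [0]. *)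
Definition level (u : T) : nat :=
  match excluded_middle_informative (exists i, V i u) with
  | left ex_i => ex_minn ex_i
  | right _ => 0%N
  end.

Lemma levelE i u : V i u -> level u = i.
Proof.
move=> Vi; rewrite /level; case: excluded_middle_informative => [ex_i|[]]; last by exists i.
by case: ex_minnP => m Vm _; apply: inV_uniq Vm Vi.
Qed.

Lemma inVle_level l u : Vle l u -> V (level u) u /\ (level u <= l)%N.
Proof. by case/inVleP => j jl Vj; rewrite (levelE Vj). Qed.

(** * Paths from the depot in a Level-Prim tree *)

Section LevelPrimPaths.
Variable H : nat -> {set T * T}.
Hypothesis H_prim : level_prim d r M H.

Lemma level_prim_edge l f : f \in H l ->
  [/\ Vle l f.1, Vle l f.2 & ~~ (Vlt l f.1 && Vlt l f.2)].
Proof.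
have [[H_le _ H_bridge] _] := H_prim l; move=> fH.
case/andP: (H_le f fH) => -> ->; split => //; apply/negP => /andP[lt1 lt2].
by move: (H_bridge f fH); rewrite /contr lt1 lt2 connect0.
Qed.

Lemma adjH_level a b : adjH H a b ->
  [/\ V (level a) a, V (level b) b &
      exists2 f, f \in H (maxn (level a) (level b)) & f = (a, b) \/ f = (b, a)].
Proof.
case=> l ab.
have [f fH fab] : exists2 f, f \in H l & f = (a, b) \/ f = (b, a).
  by case: ab => ?; [exists (a, b); last left | exists (b, a); last right].
have [le1 le2 not_lt] := level_prim_edge fH.
have [Vle_a Vle_b] : Vle l a /\ Vle l b by case: fab le1 le2 => -> /= -> ->.
have [[Va la] [Vb lb]] := (inVle_level Vle_a, inVle_level Vle_b).
have lmax : l = maxn (level a) (level b).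
  have : ~~ (Vlt l a && Vlt l b) by case: fab not_lt => -> //=; rewrite andbC.
  rewrite (inVltE _ Va) (inVltE _ Vb) negb_and -!leqNgt => ge_l.
  by apply/eqP; rewrite eqn_leq geq_max la lb leq_max ge_l.
by split => //; exists f; rewrite -?lmax.
Qed.

Lemma connect_adjH_contr L f a b : adjH H a b -> (level a <= level b <= L)%N ->
  f <> (a, b) -> f <> (b, a) -> connect (cadj (c_ L) (H L :\ f)) (c_ L a) (c_ L b).
Proof.
move=> ab /andP[lab lbL] fab fba; have [Va Vb [g gH g_ab]] := adjH_level ab.
rewrite (maxn_idPr lab) in gH; case: (ltngtP (level b) L) => [lt_L | | eq_L].
- rewrite /contr (inVltE _ Va) (inVltE _ Vb) lt_L (leq_ltn_trans lab lt_L).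
  exact: connect0.
- by rewrite ltnNge lbL.
apply/connect1/(cadj_edge _ _ g_ab); rewrite in_setD1 -eq_L gH andbT.
by apply/eqP => gf; rewrite gf in g_ab; case: g_ab.
Qed.

Lemma level_prim_path_mono p : uniq (r :: p) ->
  (forall k, (k.+1 < size (r :: p))%N -> adjH H (nth r (r :: p) k) (nth r (r :: p) k.+1)) ->
  forall k, (k.+1 < size (r :: p))%N ->
    (level (nth r (r :: p) k) <= level (nth r (r :: p) k.+1))%N.
Proof.
set s := r :: p => s_uniq s_adj; elim/ltn_ind => k IH k_lt.
have lv_le : forall t, (t <= k)%N -> (level (nth r s t) <= level (nth r s k))%N.
  apply: (@leq_chain (fun t => level (nth r s t))) => i ik.
  exact: IH ik (leq_ltn_trans ik (ltnW k_lt)).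
rewrite leqNgt; apply/negP => descent.
have [_ Vk1 [f fH f_ends]] := adjH_level (s_adj k k_lt).
rewrite (maxn_idPl (ltnW descent)) in fH.
set L := level (nth r s k) in lv_le descent fH.
have k1_f : nth r s k.+1 \in [:: f.1; f.2] by case: f_ends => ->; rewrite !inE eqxx ?orbT.
have k1_neq t : (t <= k)%N -> nth r s k.+1 != nth r s t.
  by move=> tk; rewrite nth_uniq ?gtn_eqF // (leq_ltn_trans tk (ltnW k_lt)).
have f_away t : (t < k)%N ->
    f <> (nth r s t, nth r s t.+1) /\ f <> (nth r s t.+1, nth r s t).
  move=> tk; split=> f_eq; move: k1_f;
    by rewrite f_eq !inE (negbTE (k1_neq _ (ltnW tk))) (negbTE (k1_neq _ tk)).
have reach t : (t <= k)%N -> connect (cadj (c_ L) (H L :\ f)) (c_ L r) (c_ L (nth r s t)).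
  elim: t => [|t IHt] tk; first exact: connect0.
  have t1_lt : (t.+1 < size s)%N := leq_ltn_trans tk (ltnW k_lt).
  have [fa fb] := f_away t tk; apply: connect_trans (IHt (ltnW tk)) _.
  apply: connect_adjH_contr fa fb; first exact: s_adj.
  by rewrite IH // lv_le.
have c_r : c_ L r = c_ L (nth r s k.+1).
  by rewrite /contr (inVltE _ inV0r) (inVltE _ Vk1) descent (leq_ltn_trans _ descent).
have reach_k1 : connect (cadj (c_ L) (H L :\ f)) (c_ L (nth r s k)) (c_ L (nth r s k.+1)).
  by rewrite -c_r (sym_connect_sym (cadj_sym _ _)) reach.
have [[_ _ /(_ f fH) /negP f_bridge] _] := H_prim L; apply: f_bridge.
set E := H L :\ f in reach_k1 *.
by case: f_ends => ->; last rewrite (sym_connect_sym (cadj_sym _ _)); exact: reach_k1.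
Qed.

End LevelPrimPaths.

(** * Charging shortcut tours *)

Definition shortcut_cost j a b : R := if V j a || V j b then d a b else 0.

Definition both_below j a b := Vlt j a && Vlt j b.

Definition inner_cost j a b : R :=
  if [&& Vle j.+1 a, Vle j.+1 b & ~~ both_below j a b] then d a b else 0.

Definition radial_cost j a b : R := `|band M j (d r a) - band M j (d r b)|.

Definition charge j a b : R := inner_cost j a b + radial_cost j a b.

Lemma inner_cost_ge0 j a b : 0 <= inner_cost j a b.
Proof. by rewrite /inner_cost; case: ifP => // _; apply: metric_ge0. Qed.

Lemma charge_ge0 j a b : 0 <= charge j a b.
Proof. exact: addr_ge0 (inner_cost_ge0 j a b) (normr_ge0 _). Qed.

Lemma sum_inner_cost_le N a b : \sum_(0 <= j < N) inner_cost j a b <= d a b *+ 2.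
Proof.
pose u j := if both_below j a b then d a b else 0.
have u_mono j : both_below j a b ==> both_below j.+1 a b.
  by rewrite /both_below; apply/implyP => /andP[/inVlt_le ? /inVlt_le ?]; apply/andP.
have innerE j : inner_cost j a b = (u j.+2 - u j.+1) + (u j.+1 - u j).
  rewrite /inner_cost andbA -[Vle j.+1 a && _]/(both_below j.+2 a b) /u.
  move: (u_mono j) (u_mono j.+1).
  by case: (both_below j a b) (both_below j.+1 a b) (both_below j.+2 a b) => [] [] [] //= _ _; lra.
rewrite (eq_bigr _ (fun j _ => innerE j)) big_split /=.
rewrite (telescope_sumr_eq (fun j => u j.+1) _ (leq0n N)) //.
rewrite (telescope_sumr_eq u _ (leq0n N)) //.
have u_bound k : 0 <= u k <= d a b by have := metric_ge0 a b; rewrite /u; case: ifP; lra.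
by have := u_bound 0%N; have := u_bound 1%N; have := u_bound N; have := u_bound N.+1; lra.
Qed.

Lemma sum_charge_le N a b : \sum_(0 <= j < N) charge j a b <= d a b *+ 3.
Proof.
rewrite big_split mulrSr; apply: lerD; first exact: sum_inner_cost_le.
exact: le_trans (sum_band_dist M_gt0 N _ _) (metric_reverse_triangle a b).
Qed.

Lemma dist_le_inner_walk j x I y : Vle j.+1 x -> Vle j.+1 y ->
  all (fun u => Vle j.+1 u && ~~ Vlt j u) I -> ~~ both_below j x y || (I != [::]) ->
  d x y <= walk_len (inner_cost j) x (rcons I y).
Proof.
elim: I x => [|u I IH] x x_le y_le /=.
  by rewrite orbF addr0 /inner_cost x_le y_le => _ ->.
case/andP=> /andP[u_le u_high] I_ok _.
rewrite /inner_cost x_le u_le /both_below (negbTE u_high) andbF.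
apply: le_trans (metric_triangle x u y) _; rewrite lerD2l.
by apply: IH; rewrite // /both_below (negbTE u_high).
Qed.

Lemma dist_le_radial_walk j x I y z : Vle j x -> Vle j y -> z \in I -> ~~ Vle j.+1 z ->
  d x y <= walk_len (radial_cost j) x (rcons I y).
Proof.
move=> x_le y_le /splitPr[I1 I2] z_far.
have radial_walk a s : radial_cost j a (last a s) <= walk_len (radial_cost j) a s.
  by apply: walk_len_triangle => [?|? ? ?]; rewrite /radial_cost ?subrr ?normr0 ?ler_distD.
have m_ge0 : 0 <= 2 ^+ j * M by rewrite mulr_ge0 ?exprn_ge0 ?ltW.
have band_z : band M j (d r z) = 2 ^+ j * M.
  by apply: (band_above M_gt0); rewrite ltW // ltNge -inVle_dist.
have band_le u : Vle j u -> band M j (d r u) = 0.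
  by rewrite inVle_dist => /(band_below M_gt0) ->.
rewrite rcons_cat -cat_rcons walk_len_cat last_rcons.
have := radial_walk x (rcons I1 z); have := radial_walk z (rcons I2 y).
rewrite !last_rcons /radial_cost band_z !band_le // sub0r subr0 normrN ger0_norm //.
have := metric_triangle x r y; rewrite (metric_sym x r).
by move: x_le y_le; rewrite !inVle_dist; lra.
Qed.

Lemma shortcut_le_charge j x I y : Vle j x -> all (fun u => ~~ Vle j u) I -> Vle j y ->
  shortcut_cost j x y <= walk_len (charge j) x (rcons I y).
Proof.
move=> x_le I_far y_le; rewrite /shortcut_cost.
case: ifP => [x_or_y|_]; last by apply: walk_len_ge0 => ? ?; apply: charge_ge0.
(* Either the skipped vertices stay in V_(j+1), or the tour leaves the ball of
   radius 2^(j+1) M and crosses the band (2^j M, 2^(j+1) M] twice. *)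
case: (boolP (all (Vle j.+1) I)) => [I_near | /allPn[z zI z_far]].
  have inner_le a b : inner_cost j a b <= charge j a b by rewrite lerDl normr_ge0.
  apply: le_trans (ler_walk_len _ _ inner_le); apply: dist_le_inner_walk; rewrite ?inVleS //.
    apply/allP => u uI; rewrite (allP I_near u uI) /=.
    by apply: contra (allP I_far u uI); apply: inVlt_le.
  by case/orP: x_or_y => Vj; rewrite /both_below (inVltE _ Vj) ltnn ?andbF.
have radial_le a b : radial_cost j a b <= charge j a b by rewrite lerDr inner_cost_ge0.
exact: le_trans (dist_le_radial_walk x_le y_le zI z_far) (ler_walk_len _ _ radial_le).
Qed.

Lemma shortcut_walk_le_charge j x I s : Vle j x -> all (fun u => ~~ Vle j u) I ->
  walk_len (shortcut_cost j) x (filter (Vle j) s) <= walk_len (charge j) x (I ++ s).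
Proof.
elim: s I x => [|y s IH] I x x_le I_far /=.
  by apply: walk_len_ge0 => ? ?; apply: charge_ge0.
rewrite -cat_rcons; case: ifP => y_le; last by apply: IH; rewrite // all_rcons y_le.
by rewrite walk_len_cat last_rcons /= lerD // ?shortcut_le_charge // (IH [::]).
Qed.

Definition level_walk (tau : seq T) j := filter (Vle j) (rcons tau r).

Lemma sum_level_walk_le N tau :
  \sum_(0 <= j < N) walk_len (shortcut_cost j) r (level_walk tau j) <= tour_len d r tau *+ 3.
Proof.
rewrite /tour_len -walk_len_mulrn; apply: le_trans (ler_walk_len _ _ (sum_charge_le N)).
rewrite -walk_len_sum; apply: ler_sum => j _.
by apply: (shortcut_walk_le_charge (I := [::])); rewrite // (inVleE _ inV0r).
Qed.

(** * Spanning subgraphs of the contracted levels *)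

Definition spanning_contr j (F : {set T * T}) : Prop :=
  (forall e, e \in F -> Vle j e.1 && Vle j e.2) /\
  (forall x y, Vle j x -> Vle j y -> connect (cadj (c_ j) F) (c_ j x) (c_ j y)).

Lemma spanning_contr_tree j F :
  spanning_contr j F -> exists2 E : {set T * T}, E \subset F & spanning_tree_contr d r M j E.
Proof.
case=> F_le F_conn.
pose spans (E : {set T * T}) :=
  [forall x, forall y, Vle j x ==> Vle j y ==> connect (cadj (c_ j) E) (c_ j x) (c_ j y)].
have spansP (E : {set T * T}) : reflect
    (forall x y, Vle j x -> Vle j y -> connect (cadj (c_ j) E) (c_ j x) (c_ j y)) (spans E).
  apply: (iffP forallP) => [E_sp x y x_le y_le | E_conn x].
    by move/forallP/(_ y): (E_sp x); rewrite x_le y_le.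
  by apply/forallP => y; apply/implyP => x_le; apply/implyP; apply: E_conn.
have spansF : (F \subset F) && spans F by rewrite subxx; apply/spansP.
case: (@arg_minnP _ F (fun E => (E \subset F) && spans E) (fun E => #|E|) spansF).
move=> E /andP[EF /spansP E_conn] E_min.
exists E => //; split => // [e eE | e eE]; first exact: F_le (subsetP EF e eE).
apply/negP => e_conn.
have spans_Ee : (E :\ e \subset F) && spans (E :\ e).
  rewrite (subset_trans (subD1set E e) EF); apply/spansP => x y x_le y_le.
  exact: connect_cadj_setD1 e_conn _ _ (E_conn x y x_le y_le).
by have := E_min _ spans_Ee; rewrite (cardsD1 e E) eE add1n ltnn.
Qed.

Lemma connect_level_walk j (E : {set T * T}) x s : Vle j x -> all (Vle j) s ->
  {subset [seq e <- pairmap pair x s | V j e.1 || V j e.2] <= E} ->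
  {in x :: s, forall w, connect (cadj (c_ j) E) (c_ j x) (c_ j w)}.
Proof.
elim: s x => [|y s IH] x x_le; first by move=> _ _ w; rewrite inE => /eqP ->.
case/andP => y_le s_le E_walk w; rewrite inE => /predU1P[-> | w_in]; first exact: connect0.
have step : connect (cadj (c_ j) E) (c_ j x) (c_ j y).
  case: (boolP (V j x || V j y)) => [xy | /norP[x_out y_out]].
    apply/connect1/(cadj_edge _ (E_walk (x, y) _) (or_introl erefl)).
    by rewrite /= xy inE eqxx.
  by rewrite /contr !inVle_notin_lt.
apply: connect_trans step (IH y y_le s_le _ w w_in) => e e_in; apply: E_walk.
by rewrite /=; case: ifP => _; rewrite ?inE e_in ?orbT.
Qed.

Definition level_edge_seq n (tau : 'I_n -> seq T) j : seq (T * T) :=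
  flatten [seq [seq e <- pairmap pair r (level_walk (tau k) j) | V j e.1 || V j e.2]
          | k <- index_enum 'I_n].

Lemma level_edge_seq_sum n (tau : 'I_n -> seq T) j :
  \sum_(e <- level_edge_seq tau j) d e.1 e.2 =
  \sum_(k < n) walk_len (shortcut_cost j) r (level_walk (tau k) j).
Proof.
rewrite big_flatten big_map; apply: eq_bigr => k _.
by rewrite big_filter big_mkcond walk_lenE.
Qed.

Lemma level_edges_spanning n (tau : 'I_n -> seq T) j :
  covers r tau -> spanning_contr j [set e | e \in level_edge_seq tau j].
Proof.
move=> tau_covers; set F := [set e | _].
have walk_le k u : u \in level_walk (tau k) j -> Vle j u by rewrite mem_filter => /andP[].
have r_le : Vle j r by rewrite (inVleE _ inV0r).
split=> [e | ].
  rewrite inE => /flattenP[_ /mapP[k _ ->]]; rewrite mem_filter => /andP[_ /mem_pairmap_pair].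
  by rewrite in_cons => /andP[/predU1P[-> | /walk_le ->] /walk_le ->]; rewrite ?r_le.
have reach x : Vle j x -> connect (cadj (c_ j) F) (c_ j r) (c_ j x).
  move=> x_le; case: (boolP (V j x)) => [Vx | /(inVle_notin_lt x_le) x_lt].
    case: (tau_covers x) => [-> | [k x_in]]; first exact: connect0.
    apply: (connect_level_walk r_le) => [|e e_in|].
    - by apply/allP => u; apply: walk_le.
    - rewrite inE; apply/flattenP; eexists; last exact: e_in.
      by apply: map_f; rewrite mem_index_enum.
    - by rewrite in_cons mem_filter x_le mem_rcons in_cons x_in !orbT.
  have j_gt0 : (0 < j)%N by case/inVltP: x_lt => i ij _; apply: leq_ltn_trans ij.
  by rewrite /contr x_lt (inVltE _ inV0r) j_gt0 connect0.
move=> x y x_le y_le; apply: connect_trans (reach y y_le).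
by rewrite (sym_connect_sym (cadj_sym _ _)) reach.
Qed.

Lemma level_prim_weight_le H n (tau : 'I_n -> seq T) j :
  level_prim d r M H -> covers r tau ->
  weight d (H j) <= \sum_(k < n) walk_len (shortcut_cost j) r (level_walk (tau k) j).
Proof.
move=> H_prim tau_covers.
have [E EF E_tree] := spanning_contr_tree (level_edges_spanning j tau_covers).
apply: le_trans (proj2 (H_prim j) E E_tree) _.
rewrite -level_edge_seq_sum; apply: sum_set_le_seq => [e | e /(subsetP EF)].
  exact: metric_ge0.
by rewrite inE.
Qed.

(** * Fast vehicles pay for the high levels *)

Lemma tour_len_ge_dist tau u : u \in tau -> d r u *+ 2 <= tour_len d r tau.
Proof.
have tri x s := walk_len_triangle x s metric_xx metric_triangle.
case/splitPr=> t1 t2; rewrite /tour_len rcons_cat -cat_rcons walk_len_cat last_rcons mulr2n.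
apply: lerD; first by have := tri r (rcons t1 u); rewrite last_rcons.
by have := tri u (rcons t2 r); rewrite last_rcons (metric_sym u r).
Qed.

Lemma shortcut_walk_eq0 tau j m : tour_len d r tau <= 2 ^+ m * M -> (m < j)%N ->
  walk_len (shortcut_cost j) r (level_walk tau j) = 0.
Proof.
move=> tau_short mj.
have far u : u \in r :: tau -> ~~ V j u.
  case/predU1P => [-> | u_in]; apply/negP => Vj.
    by move: mj; rewrite -(inV_uniq inV0r Vj).
  case: j mj Vj => // j mj /inV_gt u_far.
  have := tour_len_ge_dist u_in; rewrite mulr2n; have := ler_dyadic M_gt0 (mj : (m <= j)%N).
  by have := metric_ge0 r u; lra.
rewrite walk_lenE big_seq big1 // => e /mem_pairmap_pair /andP[e1 e2].
have walk_sub u : u \in level_walk tau j -> u \in r :: tau.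
  by rewrite mem_filter mem_rcons => /andP[].
have e1_in : e.1 \in r :: tau.
  by move: e1; rewrite in_cons => /predU1P[-> | /walk_sub //]; rewrite mem_head.
by rewrite /shortcut_cost (negbTE (far _ e1_in)) (negbTE (far _ (walk_sub _ e2))).
Qed.

Lemma level_prim_tail_weight n (s : 'I_n -> nat) H :
  opt_le d r s M -> level_prim d r M H ->
  forall i N, \sum_(i <= j < N) weight d (H j) <= 8 * M * (tail_cap s i)%:R.
Proof.
move=> [tau [tau_covers tau_fast]] H_prim i N.
pose cost k j := walk_len (shortcut_cost j) r (level_walk (tau k) j).
have cost_ge0 k j : 0 <= cost k j.
  by apply: walk_len_ge0 => a b; rewrite /shortcut_cost; case: ifP; rewrite ?metric_ge0.
have tau_short k : tour_len d r (tau k) <= 2 ^+ s k * M.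
  by have := tau_fast k; rewrite ler_pdivrMr ?exprn_gt0 // mulrC.
apply: (@le_trans _ _ (\sum_(i <= j < N) \sum_(k < n) cost k j)).
  by apply: ler_sum => j _; apply: level_prim_weight_le.
rewrite exchange_big tail_capE natr_sum mulr_sumr /=; apply: ler_sum => k _.
case: ifP => [_ | /negbT k_low]; last first.
  rewrite mulr0 big_nat_cond big1 // => j /andP[/andP[ij _] _].
  apply: shortcut_walk_eq0 (tau_short k) _.
  by rewrite -ltnNge in k_low; apply: leq_trans k_low (leq_trans (leq_pred i) ij).
have sum_le : \sum_(i <= j < N) cost k j <= \sum_(0 <= j < N) cost k j.
  case: (leqP i N) => [iN | /ltnW Ni]; last by rewrite big_geq // sumr_ge0.
  by rewrite (big_cat_nat (leq0n i) iN) /= lerDr sumr_ge0.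
apply: le_trans sum_le (le_trans (sum_level_walk_le N (tau k)) _).
have := tau_short k; have : 0 <= 2 ^+ s k * M by rewrite mulr_ge0 ?exprn_ge0 ?ltW.
by rewrite natrX mulrAC -mulrA -mulr_natl; lra.
Qed.

End HTSP.

Theorem corollary4 (R : realFieldType) (T : finType) (d : T -> T -> R) (r : T)
  (n : nat) (s : 'I_n -> nat) (M : R) (H : nat -> {set T * T}) :
  is_metric d -> 0 < M -> opt_le d r s M -> level_prim d r M H ->
  (forall p : seq T, uniq (r :: p) ->
     (forall k, (k.+1 < size (r :: p))%N ->
        adjH H (nth r (r :: p) k) (nth r (r :: p) k.+1)) ->
     leafH H (last r p) ->
     forall k, (k.+1 < size (r :: p))%N ->
       forall i j, inV d r M i (nth r (r :: p) k) ->
                   inV d r M j (nth r (r :: p) k.+1) -> (i <= j)%N)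
  /\
  (forall i N : nat,
     \sum_(i <= j < N) weight d (H j) <= 8 * M * (tail_cap s i)%:R).
Proof.
move=> d_metric M_gt0 s_opt H_prim.
(* Monotonicity holds along every path from [r]. *)
split=> [p p_uniq p_adj _ k k_lt i j Vi Vj | i N].
  have := level_prim_path_mono d_metric M_gt0 H_prim p_uniq p_adj k_lt.
  by rewrite (levelE M_gt0 Vi) (levelE M_gt0 Vj).
exact: (level_prim_tail_weight d_metric M_gt0 s_opt H_prim i N).
Qed.
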